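(* Let $n\ge 2$ be an integer and let $\mathbb{K}$ be a field such that $\operatorname{char}\mathbb{K}$ is either $0$ or coprime to both $n$ and $n-1$. Let $A_n=\mathbb{K}[x,y]/I_n$, where $I_n=(y^{2n+3},\; x^ny^2-y^{n+2},\; x^{2n+1}-xy^{n+1})$, and let $\mathfrak{m}_n$ be the ideal of $A_n$ generated by (the images of) $x,y$. Then the one-dimensional subspace $\langle y^{2n+1}\rangle\subseteq\mathfrak{m}_n$ is invariant under the automorphism group $\operatorname{Aut}(A_n)$ of the $\mathbb{K}$-algebra $A_n$. More precisely, for every $a\in\operatorname{Aut}(A_n)$ there is a scalar $\gamma_a\in\mathbb{K}$ with $a(y^{2n+1})=\gamma_a y^{2n+1}$, and $\gamma_a^{(n-1)/3}=1$ if $n\equiv 1 \pmod 3$, while $\gamma_a^{\,n-1}=1$ otherwise.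
   Context: All algebras are associative, commutative, with unity; $\operatorname{Aut}(A_n)$ denotes the group of unital $\mathbb{K}$-algebra automorphisms of $A_n$. Monomials such as $y^{2n+1}$ are regarded as elements of $A_n$ via the quotient map. (The paper shows $A_n$ is a finite-dimensional local algebra with maximal ideal $\mathfrak{m}_n$.) *)

From HB Require Import structures.
From mathcomp Require Import all_boot all_order all_algebra.
From mathcomp Require Import mpoly.
Set Implicit Arguments. Unset Strict Implicit. Unset Printing Implicit Defensive.
Import Order.TTheory GRing.Theory.
Local Open Scope ring_scope.

Section An.
Variable K : fieldType.

Definition px : {mpoly K[2]} := 'X_(@ord0 1).
Definition py : {mpoly K[2]} := 'X_(@ord_max 1).

Definition gen1 (n : nat) : {mpoly K[2]} := py ^+ (2 * n + 3).
Definition gen2 (n : nat) : {mpoly K[2]} := px ^+ n * py ^+ 2 - py ^+ (n + 2).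
Definition gen3 (n : nat) : {mpoly K[2]} :=
  px ^+ (2 * n + 1) - px * py ^+ (n + 1).

Definition in_In (n : nat) (p : {mpoly K[2]}) : Prop :=
  exists c1 c2 c3 : {mpoly K[2]}, p = c1 * gen1 n + c2 * gen2 n + c3 * gen3 n.

Definition evalXY (A : comAlgType K) (X Y : A) (p : {mpoly K[2]}) : A :=
  mmap (in_alg A) (fun i : 'I_2 => if i == ord0 then X else Y) p.

(* (A, X, Y) is a presentation of A_n = K[x,y]/I_n : the evaluation map
   K[x,y] -> A, x |-> X, y |-> Y, is surjective with kernel exactly I_n.
   Equivalently, A is the K-algebra A_n with X, Y the images of x, y. *)
Definition presents_An (n : nat) (A : comAlgType K) (X Y : A) : Prop :=
  (forall a : A, exists p : {mpoly K[2]}, a = evalXY X Y p) /\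
  (forall p : {mpoly K[2]}, evalXY X Y p = 0 <-> in_In n p).

End An.

From HB Require Import structures.
From mathcomp Require Import all_boot all_order all_algebra.
From mathcomp Require Import mpoly.
From mathcomp Require Import zify ring.
Set Implicit Arguments. Unset Strict Implicit. Unset Printing Implicit Defensive.
Import Order.TTheory GRing.Theory.
Local Open Scope ring_scope.

(* An automorphism a is determined by f = a x and g = a y, which satisfy the defining
   relations of A_n.  The socle of A_n is the line spanned by s = y^(2n+2); it is nonzero
   because the linear form summing the coefficients of y^(2n+2), x^n y^(n+2), x^(2n) y^2
   and x^(3n) y vanishes on I_n.  Multiplying the relations satisfied by f and g by
   suitable monomials x^i y^j kills all but one term of their binomial expansions and
   lands in K s.  Comparing coefficients shows in turn that f and g have no constant
   term, that g = t y and f = p x modulo higher terms, with p^n = t^n and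
   p^(2n) = t^(n+1), hence t^(n-1) = 1, and, comparing the coefficients of y in the
   linear parts, that g^(2n+1) = t^(2n+1) y^(2n+1).  So gamma = t^(2n+1) = t^3. *)

(* p, u: coefficients of x and x y in a(x); t, v: coefficients of y and y^2 in a(y). *)
Lemma linear_coefficient_eqs (K : fieldType) (n : nat) (p t u v : K) :
  (1 < n)%N -> n%:R != 0 :> K -> n.-1%:R != 0 :> K -> t != 0 ->
  p ^+ n * t ^+ 2 = t ^+ (n + 2) ->
  p ^+ (2 * n + 1) = t ^+ (n + 1) * p ->
  p ^+ n * (v * t *+ 2) + u * p ^+ n.-1 *+ n * t ^+ 2 = v * t ^+ (n + 1) *+ (n + 2) ->
  u * p ^+ (2 * n) *+ (2 * n + 1) = t ^+ (n + 1) * u + v * t ^+ n *+ (n + 1) * p ->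
  t ^+ n.-1 = 1 /\ v = 0.
Proof.
case: n => [|[|m]] // _ n_neq0 n1_neq0 t_neq0 eq1 eq2 jet1 jet2.
have tk k : t ^+ k != 0 by rewrite expf_neq0.
have pn : p ^+ m.+2 = t ^+ m.+2 by apply: (mulIf (tk 2)); rewrite eq1 exprD.
have p_neq0 : p != 0 by apply/eqP => p0; move: (tk m.+2); rewrite -pn p0 expr0n eqxx.
have p2n : p ^+ (2 * m.+2) = t ^+ (m.+2 + 1).
  by apply: (mulIf p_neq0); rewrite -exprSr -addn1.
have t_root : t ^+ m.+1 = 1.
  apply: (mulIf (tk (m.+2 + 1))); rewrite mul1r -exprD -p2n mulnC exprM pn -exprM.
  by congr (_ ^+ _); lia.
split=> //.
have tn : t ^+ m.+2 = t by rewrite exprS t_root mulr1.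
have tn1 : t ^+ (m.+2 + 1) = t * t by rewrite exprD tn.
rewrite pn tn tn1 in jet1; rewrite p2n tn1 tn in jet2.
move/eqP: jet1; rewrite -subr_eq0 => /eqP jet1.
have uv : u * p ^+ m.+1 = v.
  have : m.+2%:R * t ^+ 2 * (u * p ^+ m.+1 - v) = 0 by rewrite -jet1; ring.
  by move/eqP; rewrite !mulf_eq0 (negbTE n_neq0) (negbTE t_neq0) subr_eq0 => /eqP.
have vp : v * p = u * t by rewrite -uv -mulrA -exprSr pn tn.
have jet2' : u * (t * t) *+ (2 * m.+2 + 1) = t * t * u + u * t * t *+ (m.+2 + 1).
  by rewrite jet2 -vp; ring.
have : m.+1%:R * t ^+ 2 * u = 0.
  by rewrite -(subrr (t * t * u + u * t * t *+ (m.+2 + 1))) -{1}jet2'; ring.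
move/eqP; rewrite !mulf_eq0 (negbTE n1_neq0) (negbTE t_neq0) => /eqP u0.
by rewrite -uv u0 mul0r.
Qed.

Lemma natf_neq0_coprime_pchar (K : fieldType) m :
  (0 < m)%N -> (forall p, p \in [pchar K] -> coprime p m) -> m%:R != 0 :> K.
Proof.
move=> m_gt0 cop; rewrite natf_neq0_pchar; apply/pnatP => // p p_pr p_m.
by apply: contraL p_m => /cop; rewrite prime_coprime.
Qed.

Lemma pchar_coprime_conditions (K : fieldType) n :
  (2 <= n)%N ->
  ([pchar K] =i pred0 \/
   (forall p : nat, p \in [pchar K] -> coprime p n /\ coprime p n.-1)) ->
  [/\ n%:R != 0 :> K, n.-1%:R != 0 :> K & 2%:R != 0 :> K].
Proof.
move=> n_ge2 hchar.
have cop p : p \in [pchar K] -> coprime p n /\ coprime p n.-1.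
  by case: hchar => [char0 | cop]; [rewrite char0 | apply: cop].
have even_prod : (2 %| n * n.-1)%N.
  by rewrite -[n](prednK (ltnW n_ge2)) dvdn2 oddM /=; case: odd.
split; apply: natf_neq0_coprime_pchar; try lia.
- by move=> p /cop[].
- by move=> p /cop[].
- by move=> p /cop[cn cn1]; apply: coprime_dvdr even_prod _; rewrite coprimeMr cn cn1.
Qed.

Section Relations.
Variables (K : fieldType) (n : nat) (A : comAlgType K) (X Y : A).
Hypothesis n_ge2 : (2 <= n)%N.
Hypothesis relY : Y ^+ (2 * n + 3) = 0.
Hypothesis relXY : X ^+ n * Y ^+ 2 = Y ^+ (n + 2).
Hypothesis relX : X ^+ (2 * n + 1) = X * Y ^+ (n + 1).

Definition xy (i j : nat) : A := X ^+ i * Y ^+ j.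

Lemma xyM i j k l : xy i j * xy k l = xy (i + k) (j + l).
Proof. by rewrite /xy !exprD; ring. Qed.

Lemma xyX i j e : xy i j ^+ e = xy (i * e) (j * e).
Proof. by rewrite /xy exprMn -!exprM. Qed.

Lemma xy00 : xy 0 0 = 1. Proof. by rewrite /xy !expr0 mulr1. Qed.
Lemma xy10 : xy 1 0 = X. Proof. by rewrite /xy expr1 expr0 mulr1. Qed.
Lemma xy01 : xy 0 1 = Y. Proof. by rewrite /xy expr1 expr0 mul1r. Qed.
Lemma xy0j j : xy 0 j = Y ^+ j. Proof. by rewrite /xy expr0 mul1r. Qed.

Lemma xy_split i j a b : (a <= i)%N -> (b <= j)%N -> xy i j = xy a b * xy (i - a) (j - b).
Proof. by move=> ai bj; rewrite xyM; congr xy; lia. Qed.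

Lemma xy_relY i j : xy i (2 * n + 3 + j) = 0.
Proof. by rewrite /xy exprD relY mul0r mulr0. Qed.

Lemma xy_relXY i j : xy (n + i) (2 + j) = xy i (n + 2 + j).
Proof.
by rewrite /xy [X ^+ (n + i)]exprD [Y ^+ (2 + j)]exprD [Y ^+ (n + 2 + j)]exprD -relXY; ring.
Qed.

Lemma xy_relX i j : xy (2 * n + 1 + i) j = xy (1 + i) (n + 1 + j).
Proof.
rewrite /xy [X ^+ (2 * n + 1 + i)]exprD [X ^+ (1 + i)]exprD [Y ^+ (n + 1 + j)]exprD.
by rewrite relX expr1; ring.
Qed.

(* x y^(n+3) = x^(2n+1) y^2 = x^(n+1) y^(n+2) = x y^(2n+2): multiplying by y^(n-1) fixes
   x y^(n+3), and twice that pushes the power of y beyond 2n+2. *)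
Lemma xy1_yn3 : xy 1 (n + 3) = 0.
Proof.
have fix1 : xy 1 (n + 3) = xy 1 (n + 3) * xy 0 (n - 1).
  transitivity (xy (2 * n + 1 + 0) 2); first by rewrite xy_relX; congr xy; lia.
  transitivity (xy (n + (n + 1)) (2 + 0)); first by congr xy; lia.
  rewrite xy_relXY; transitivity (xy (n + 1) (2 + n)); first by congr xy; lia.
  by rewrite xy_relXY xyM; congr xy; lia.
rewrite fix1 fix1 -mulrA !xyM.
by rewrite (_ : (n + 3 + (n - 1 + (n - 1)) = 2 * n + 3 + (n - 2))%N) ?xy_relY //; lia.
Qed.

Definition zero_region i j :=
  (2 * n + 3 <= j)%N \/ (1 <= i /\ n + 3 <= j)%N \/ (n + 1 <= i /\ 3 <= j)%N \/
  (2 * n + 1 <= i /\ 2 <= j)%N \/ (3 * n + 1 <= i)%N.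

Lemma xy_zero_region i j : zero_region i j -> xy i j = 0.
Proof.
have xy_n1_3 : xy (n + 1) 3 = 0.
  by rewrite (_ : (3 = 2 + 1)%N) // xy_relXY -xy1_yn3; congr xy; lia.
have xy_2n1_2 : xy (2 * n + 1) 2 = 0.
  by rewrite -[(2 * n + 1)%N]addn0 xy_relX -xy1_yn3; congr xy; lia.
have xy_3n1_0 : xy (3 * n + 1) 0 = 0.
  rewrite (_ : (3 * n + 1 = 2 * n + 1 + n)%N) ?xy_relX; last lia.
  by rewrite (@xy_split _ _ (n + 1) 3) ?xy_n1_3 ?mul0r //; lia.
case=> [j_big | [[i1 j_big] | [[i_big j3] | [[i_big j2] | i_big]]]].
- by rewrite (_ : (j = 2 * n + 3 + (j - (2 * n + 3)))%N) ?xy_relY //; lia.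
- by rewrite (@xy_split i j 1 (n + 3)) // xy1_yn3 mul0r.
- by rewrite (@xy_split i j (n + 1) 3) // xy_n1_3 mul0r.
- by rewrite (@xy_split i j (2 * n + 1) 2) // xy_2n1_2 mul0r.
- by rewrite (@xy_split i j (3 * n + 1) 0) // xy_3n1_0 mul0r.
Qed.

Definition socle := xy 0 (2 * n + 2).
Definition y2n1 := xy 0 (2 * n + 1).

Lemma socle_xy_n : xy n (n + 2) = socle.
Proof.
transitivity (xy (n + 0) (2 + n)); first by congr xy; lia.
by rewrite xy_relXY /socle; congr xy; lia.
Qed.

Lemma socle_xy_3n : xy (3 * n) 1 = socle.
Proof.
rewrite (_ : (3 * n = 2 * n + 1 + (n - 1))%N) ?xy_relX -?socle_xy_n; last lia.
by congr xy; lia.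
Qed.

Lemma y2n1_xy_n : xy n (n + 1) = y2n1.
Proof.
transitivity (xy (n + 0) (2 + (n - 1))); first by congr xy; lia.
by rewrite xy_relXY /y2n1; congr xy; lia.
Qed.

Lemma y2n1_xy_3n : xy (3 * n) 0 = y2n1.
Proof.
rewrite (_ : (3 * n = 2 * n + 1 + (n - 1))%N) ?xy_relX -?y2n1_xy_n; last lia.
by congr xy; lia.
Qed.

Definition const_term (z : A) (c : K) := exists u v, z = c%:A + X * u + Y * v.

Lemma const_term_alg c : const_term c%:A c.
Proof. by exists 0, 0; rewrite !mulr0 !addr0. Qed.

Lemma const_termD z z' c c' :
  const_term z c -> const_term z' c' -> const_term (z + z') (c + c').
Proof. by move=> [u [v ->]] [u' [v' ->]]; exists (u + u'), (v + v'); rewrite scalerDl; ring. Qed.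

Lemma const_termM z z' c c' :
  const_term z c -> const_term z' c' -> const_term (z * z') (c * c').
Proof.
move=> [u [v ->]] [u' [v' ->]].
exists (c%:A * u' + u * (c'%:A + X * u' + Y * v')).
exists (c%:A * v' + v * (c'%:A + X * u' + Y * v')).
have algM : (c * c')%:A = c%:A * c'%:A :> A by rewrite -scalerAl mul1r scalerA.
by rewrite algM; ring.
Qed.

Lemma const_termXn z c k : const_term z c -> const_term (z ^+ k) (c ^+ k).
Proof.
move=> zc; elim: k => [|k IH]; first by rewrite !expr0; exists 0, 0; rewrite !mulr0 !addr0 scale1r.
by rewrite !exprS; apply: const_termM.
Qed.

Lemma const_termMn z c k : const_term z c -> const_term (z *+ k) (c *+ k).
Proof.
by move=> [u [v ->]]; exists (u *+ k), (v *+ k); rewrite !mulrnDl -!mulrnAr scalerMnl.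
Qed.

Lemma const_term0_xy z : const_term z 0 -> exists u v, z = xy 1 0 * u + xy 0 1 * v.
Proof. by move=> [u [v ->]]; exists u, v; rewrite scale0r add0r xy10 xy01. Qed.

Lemma const_term0_xyl i j u : (0 < i + j)%N -> const_term (xy i j * u) 0.
Proof.
case: i => [|i] ij.
  case: j ij => // j _; exists 0, (xy 0 j * u).
  by rewrite mulr0 addr0 scale0r add0r mulrA -xy01 xyM.
exists (xy i j * u), 0.
by rewrite mulr0 addr0 scale0r add0r mulrA -xy10 xyM.
Qed.

Lemma shift_x k v r c : const_term v c -> const_term r 0 ->
  exists v' r', const_term v' c /\
    xy 0 1 * v + xy k.+1 0 * r = xy 0 1 * v' + xy k.+2 0 * r'.
Proof.
move=> vc /const_term0_xy [a [b ->]]; exists (v + xy k.+1 0 * b), a; split.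
  by rewrite -[c]addr0; apply: const_termD; last exact: const_term0_xyl.
by rewrite !mulrDr ![xy _ _ * (xy _ _ * _)]mulrA !xyM addrA addrAC !addn0 !add0n addn1.
Qed.

Lemma shift_y k w r c : const_term w c -> const_term r 0 ->
  exists w' r', const_term w' c /\
    xy 1 0 * w + xy 0 k.+1 * r = xy 1 0 * w' + xy 0 k.+2 * r'.
Proof.
move=> wc /const_term0_xy [a [b ->]]; exists (w + xy 0 k.+1 * a), b; split.
  by rewrite -[c]addr0; apply: const_termD; last exact: const_term0_xyl.
by rewrite !mulrDr ![xy _ _ * (xy _ _ * _)]mulrA !xyM addrA !addn0 !add0n addn1.
Qed.

Lemma ann_const_term P z c : P * X = 0 -> P * Y = 0 -> const_term z c -> P * z = c *: P.
Proof. by move=> PX PY [u [v ->]]; rewrite !mulrDr !mulrA PX PY !mul0r !addr0 mulr_algr. Qed.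

Local Ltac region := rewrite /zero_region; lia.

Lemma socle_mul_const_term z c : const_term z c -> socle * z = c *: socle.
Proof.
apply: ann_const_term; rewrite /socle -?xy10 -?xy01 xyM; apply: xy_zero_region; region.
Qed.

Lemma y2n1_mulX : y2n1 * X = 0.
Proof. by rewrite /y2n1 -xy10 xyM; apply: xy_zero_region; region. Qed.

Lemma y2n1_mulY : y2n1 * Y = socle.
Proof. by rewrite /y2n1 /socle -xy01 xyM; congr xy; lia. Qed.

Hypothesis socle_neq0 : socle != 0.

Lemma scale_socle_eq0 c : (c *: socle == 0) = (c == 0).
Proof. by rewrite scaler_eq0 (negbTE socle_neq0) orbF. Qed.

Lemma scale_socle_inj c d : c *: socle = d *: socle -> c = d.
Proof. by move/eqP; rewrite -subr_eq0 -scalerBl scale_socle_eq0 subr_eq0 => /eqP. Qed.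

Hypothesis const_term_total : forall z, exists c, const_term z c.

(* jet z c d: z = c + d y modulo (x, y^2) *)
Definition jet z c d := y2n1 * z = c *: y2n1 + d *: socle /\ socle * z = c *: socle.

Lemma jet_of_const_term z c : const_term z c -> exists d, jet z c d.
Proof.
move=> zc; have [u [v ez]] := zc; have [d vd] := const_term_total v.
exists d; split; last exact: socle_mul_const_term.
by rewrite ez !mulrDr !mulrA y2n1_mulX y2n1_mulY mul0r addr0 mulr_algr (socle_mul_const_term vd).
Qed.

Lemma jet1 : jet 1 1 0.
Proof. by split; rewrite mulr1 ?scale1r // scale0r addr0. Qed.

Lemma jetM z c d z' c' d' : jet z c d -> jet z' c' d' -> jet (z * z') (c * c') (c * d' + d * c').
Proof.
move=> [yz sz] [yz' sz']; split; last by rewrite mulrA sz -scalerAl sz' scalerA.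
by rewrite mulrA yz mulrDl -!scalerAl yz' sz' scalerDr !scalerA scalerDl addrA.
Qed.

Lemma jetXn z c d k : jet z c d -> jet (z ^+ k) (c ^+ k) (d * c ^+ k.-1 *+ k).
Proof.
move=> zj; elim: k => [|k IH]; first by rewrite !expr0 mulr0n; exact: jet1.
rewrite !exprS; have := jetM zj IH; congr jet.
by case: k {IH} => [|k] /=; rewrite ?mulr0n ?mulr0 ?add0r ?expr0 ?mulr1 // exprS; ring.
Qed.

Fixpoint in_mpow (k : nat) (z : A) : Prop :=
  if k is k'.+1 then exists u v, [/\ in_mpow k' u, in_mpow k' v & z = X * u + Y * v] else True.

Lemma in_mpow_mulr k z w : in_mpow k z -> in_mpow k (z * w).
Proof.
elim: k z => // k IH z [u [v [hu hv ->]]].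
by exists (u * w), (v * w); split; [exact: IH | exact: IH | rewrite mulrDl !mulrA].
Qed.

Lemma in_mpowM a b z w : in_mpow a z -> in_mpow b w -> in_mpow (a + b) (z * w).
Proof.
elim: a z => [|a IH] z hz hw; first by rewrite add0n mulrC; apply: in_mpow_mulr.
case: hz => [u [v [hu hv ->]]]; rewrite addSn.
by exists (u * w), (v * w); split; [exact: IH | exact: IH | rewrite mulrDl !mulrA].
Qed.

Lemma in_mpowXn a k z : in_mpow a z -> in_mpow (a * k) (z ^+ k).
Proof.
by move=> hz; elim: k => [|k IH]; rewrite ?muln0 // exprS mulnS; apply: in_mpowM.
Qed.

Lemma in_mpow1 z : const_term z 0 -> in_mpow 1 z.
Proof. by move=> [u [v ->]]; exists u, v; rewrite scale0r add0r. Qed.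

Lemma xy_mul_in_mpow_eq0 k z i j : in_mpow k z ->
  (forall a, (a <= k)%N -> zero_region (i + a) (j + k - a)) -> xy i j * z = 0.
Proof.
elim: k z i j => [|k IH] z i j hz region_ok.
  by rewrite xy_zero_region ?mul0r //; have := region_ok 0 (leqnn 0); rewrite !addn0 subn0.
case: hz => [u [v [hu hv ->]]].
rewrite mulrDr !mulrA -xy10 -xy01 !xyM !addn0 (IH u) ?(IH v) ?addr0 // => a ak.
- rewrite (_ : (j + 1 + k - a = j + k.+1 - a)%N); last lia.
  by apply: region_ok; lia.
- rewrite (_ : (i + 1 + a = i + a.+1)%N); last lia.
  by rewrite (_ : (j + k - a = j + k.+1 - a.+1)%N); [apply: region_ok | lia].
Qed.

Lemma in_mpow_eq0 k z : (3 * n + 2 <= k)%N -> in_mpow k z -> z = 0.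
Proof.
move=> k_big hz; rewrite -[z]mul1r -xy00 (xy_mul_in_mpow_eq0 hz) // => a _; region.
Qed.

Lemma xy_binom_term al be a1 b1 a2 b2 m k (s t : A) :
  xy al be * ((xy a1 b1 * s) ^+ (m - k) * (xy a2 b2 * t) ^+ k *+ 'C(m, k))
  = xy (al + a1 * (m - k) + a2 * k) (be + b1 * (m - k) + b2 * k)
      * (s ^+ (m - k) * t ^+ k) *+ 'C(m, k).
Proof. by rewrite [(xy a1 b1 * s) ^+ _]exprMn [(xy a2 b2 * t) ^+ _]exprMn !xyX -!xyM; ring. Qed.

Lemma xy_mul_binom_eq0 al be a1 b1 a2 b2 m (s t : A) :
  (forall k, (k <= m)%N ->
     zero_region (al + a1 * (m - k) + a2 * k) (be + b1 * (m - k) + b2 * k)) ->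
  xy al be * (xy a1 b1 * s + xy a2 b2 * t) ^+ m = 0.
Proof.
move=> region_ok; rewrite exprDn mulr_sumr big1 // => [[k km]] _ /=.
by rewrite xy_binom_term xy_zero_region ?mul0r ?mul0rn //; apply: region_ok.
Qed.

Lemma xy_mul_binom_lead i0 j0 al be a1 b1 a2 b2 m (s t : A) :
  (forall k, (1 <= k <= m)%N ->
     zero_region (al + a1 * (m - k) + a2 * k) (be + b1 * (m - k) + b2 * k)) ->
  i0 = (al + a1 * m)%N -> j0 = (be + b1 * m)%N ->
  xy al be * (xy a1 b1 * s + xy a2 b2 * t) ^+ m = xy i0 j0 * s ^+ m.
Proof.
move=> region_ok -> ->; rewrite exprDn mulr_sumr big_ord_recl /= big1 ?addr0.
  by rewrite xy_binom_term subn0 !muln0 !addn0 expr0 mulr1 bin0 mulr1n.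
move=> [k km] _; rewrite /= xy_binom_term xy_zero_region ?mul0r ?mul0rn //.
by apply: region_ok; rewrite /bump /=; lia.
Qed.

Arguments xy_mul_binom_lead i0 j0 {al be a1 b1 a2 b2 m s t}.

Lemma xy_mul_sum2 al be a b c d (s t G : A) :
  xy al be * ((xy a b * s + xy c d * t) * G) =
  xy (al + a) (be + b) * G * s + xy (al + c) (be + d) * G * t.
Proof. by rewrite -[xy (al + a) _]xyM -[xy (al + c) _]xyM; ring. Qed.

Lemma xy_mul_sum3 al be a b c d e h (s t u G : A) :
  xy al be * (G * (xy a b * s + xy c d * t + xy e h * u)) =
  xy (al + a) (be + b) * G * s + xy (al + c) (be + d) * G * t + xy (al + e) (be + h) * G * u.
Proof. by rewrite -[xy (al + a) _]xyM -[xy (al + c) _]xyM -[xy (al + e) _]xyM; ring. Qed.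

Lemma xy_sum2_sqr a b c d (s t : A) :
  (xy a b * s + xy c d * t) ^+ 2 =
  xy (a * 2) (b * 2) * s ^+ 2 + xy (a + c) (b + d) * (s * t *+ 2) + xy (c * 2) (d * 2) * t ^+ 2.
Proof. by rewrite -!xyX -xyM; ring. Qed.

Local Ltac xy_side := first [move=> ? ?; region | lia].

Variables f g : A.
Hypothesis g_relY : g ^+ (2 * n + 3) = 0.
Hypothesis fg_relXY : f ^+ n * g ^+ 2 = g ^+ (n + 2).
Hypothesis f_relX : f ^+ (2 * n + 1) = f * g ^+ (n + 1).

Lemma const_g0 : const_term g 0.
Proof.
have [c gc] := const_term_total g.
have := socle_mul_const_term (const_termXn (2 * n + 3) gc).
rewrite g_relY mulr0 => /esym/eqP; rewrite scale_socle_eq0 expf_eq0 => /andP[_ /eqP c0].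
by rewrite -c0.
Qed.

Lemma const_f0 : const_term f 0.
Proof.
have [c fc] := const_term_total f.
have := congr1 (fun z => socle * z) f_relX.
rewrite /= (socle_mul_const_term (const_termXn _ fc)).
rewrite (socle_mul_const_term (const_termM fc (const_termXn _ const_g0))).
rewrite [0 ^+ _]exprD expr1 !mulr0 scale0r => /eqP.
by rewrite scale_socle_eq0 expf_eq0 => /andP[_ /eqP c0]; rewrite -c0.
Qed.

Lemma g_lin_x0 f1 f2 g1 g2 p s :
  f = xy 1 0 * f1 + xy 0 1 * f2 -> g = xy 1 0 * g1 + xy 0 1 * g2 ->
  const_term f1 p -> const_term g1 s -> s = 0.
Proof.
move=> ef eg f1p g1s.
have relX_lhs : xy (2 * n - 2) 1 * f ^+ (2 * n + 1) = 0.
  by rewrite ef; apply: xy_mul_binom_eq0 => k _; region.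
have relX_rhs : xy (2 * n - 2) 1 * (f * g ^+ (n + 1)) = (s ^+ (n + 1) * p) *: socle.
  rewrite {1}ef xy_mul_sum2 eg (xy_mul_binom_lead (3 * n) 1); try xy_side.
  rewrite xy_mul_binom_eq0; try xy_side.
  rewrite mul0r addr0 socle_xy_3n -mulrA.
  by rewrite (socle_mul_const_term (const_termM (const_termXn _ g1s) f1p)).
have relY_lhs : xy (2 * n - 2) 1 * g ^+ (n + 2) = s ^+ (n + 2) *: socle.
  rewrite eg (xy_mul_binom_lead (3 * n) 1); try xy_side.
  by rewrite socle_xy_3n (socle_mul_const_term (const_termXn _ g1s)).
have relXY_lhs : xy (2 * n - 2) 1 * (f ^+ n * g ^+ 2) = (p ^+ n * s ^+ 2) *: socle.
  rewrite eg xy_sum2_sqr xy_mul_sum3 ef (xy_mul_binom_lead (3 * n) 1); try xy_side.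
  do 2 (rewrite xy_mul_binom_eq0; try xy_side).
  rewrite !mul0r !addr0 socle_xy_3n -mulrA.
  by rewrite (socle_mul_const_term (const_termM (const_termXn _ f1p) (const_termXn _ g1s))).
have sp : s ^+ (n + 1) * p = 0.
  by apply/eqP; rewrite -scale_socle_eq0 -relX_rhs -f_relX relX_lhs.
have ps : p ^+ n * s ^+ 2 = s ^+ (n + 2).
  by apply: scale_socle_inj; rewrite -relY_lhs -relXY_lhs fg_relXY.
apply/eqP; apply: contraT => s_neq0.
move/eqP: sp; rewrite mulf_eq0 expf_eq0 (negbTE s_neq0) andbF /= => /eqP p0.
move/eqP: ps; rewrite p0 expr0n gtn_eqF ?mul0r //; last exact: ltnW.
by rewrite eq_sym expf_eq0 (negbTE s_neq0) andbF.
Qed.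

Hypothesis g_pow_neq0 : g ^+ (2 * n + 2) != 0.

Lemma g_lin_y_neq0 g1 g2 t : g = xy 1 0 * g1 + xy 0 1 * g2 ->
  const_term g1 0 -> const_term g2 t -> t != 0.
Proof.
move=> eg g1_0 g2t; apply: (contra_neq _ g_pow_neq0) => t0.
have g_m2 : in_mpow 2 g.
  rewrite t0 in g2t; exists g1, g2.
  by split; [exact: in_mpow1 | exact: in_mpow1 | rewrite eg xy10 xy01].
by apply: in_mpow_eq0 (in_mpowXn (2 * n + 2) g_m2); lia.
Qed.

Lemma f_lin_y0 f1 f2 v ga q t :
  f = xy 1 0 * f1 + xy 0 1 * f2 -> const_term f2 q ->
  g = xy 0 1 * v + xy 2 0 * ga -> const_term v t -> t != 0 -> q = 0.
Proof.
move=> ef f2q eg vt t_neq0.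
have relX_lhs : xy 0 n * f ^+ (2 * n + 1) = 0.
  by rewrite ef; apply: xy_mul_binom_eq0 => k _; region.
have relX_rhs : xy 0 n * (f * g ^+ (n + 1)) = (t ^+ (n + 1) * q) *: socle.
  rewrite {1}ef xy_mul_sum2 eg xy_mul_binom_eq0; try xy_side.
  rewrite (xy_mul_binom_lead 0 (2 * n + 2)); try xy_side.
  rewrite mul0r add0r -/socle -mulrA.
  by rewrite (socle_mul_const_term (const_termM (const_termXn _ vt) f2q)).
have : (t ^+ (n + 1) * q) *: socle = 0 by rewrite -relX_rhs -f_relX relX_lhs.
by move/eqP; rewrite scale_socle_eq0 mulf_eq0 expf_eq0 (negbTE t_neq0) andbF => /eqP.
Qed.

Lemma lin_relXY w fb v ga p t :
  f = xy 1 0 * w + xy 0 2 * fb -> const_term w p ->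
  g = xy 0 1 * v + xy 2 0 * ga -> const_term v t ->
  p ^+ n * t ^+ 2 = t ^+ (n + 2).
Proof.
move=> ef wp eg vt; apply: scale_socle_inj.
transitivity (xy 0 n * (f ^+ n * g ^+ 2)).
  rewrite eg xy_sum2_sqr xy_mul_sum3 ef (xy_mul_binom_lead n (n + 2)); try xy_side.
  do 2 (rewrite xy_mul_binom_eq0; try xy_side).
  rewrite !mul0r !addr0 socle_xy_n -mulrA.
  by rewrite (socle_mul_const_term (const_termM (const_termXn _ wp) (const_termXn _ vt))).
rewrite fg_relXY eg (xy_mul_binom_lead 0 (2 * n + 2)); try xy_side.
by rewrite -/socle (socle_mul_const_term (const_termXn _ vt)).
Qed.

Hypothesis two_neq0 : 2%:R != 0 :> K.

Lemma g_quad_x0 w fb v ga p t a :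
  f = xy 1 0 * w + xy 0 2 * fb -> const_term w p ->
  g = xy 0 1 * v + xy 2 0 * ga -> const_term v t -> const_term ga a ->
  p != 0 -> t != 0 -> a = 0.
Proof.
move=> ef wp eg vt gaa p_neq0 t_neq0.
pose P := xy (2 * n - 2) (n + 2).
have P_mul_const z c : const_term z c -> P * z = c *: P.
  by apply: ann_const_term; rewrite -?xy10 -?xy01 xyM; apply: xy_zero_region; region.
have relXY_lhs : xy (2 * n - 2) 0 * (f ^+ n * g ^+ 2) =
    (p ^+ n * t ^+ 2) *: P + (p ^+ n * (t * a *+ 2)) *: socle.
  rewrite eg xy_sum2_sqr xy_mul_sum3 ef (xy_mul_binom_lead (3 * n - 2) 2); try xy_side.
  rewrite (xy_mul_binom_lead (3 * n) 1); try xy_side.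
  rewrite xy_mul_binom_eq0; try xy_side.
  have -> : xy (3 * n - 2) 2 = P.
    transitivity (xy (n + (2 * n - 2)) (2 + 0)); first by congr xy; lia.
    by rewrite xy_relXY; congr xy; lia.
  have wv := const_termM (const_termXn n wp) (const_termXn 2 vt).
  have wva := const_termM (const_termXn n wp) (const_termMn 2 (const_termM vt gaa)).
  rewrite mul0r addr0 socle_xy_3n -mulrA (P_mul_const _ _ wv).
  by rewrite -mulrA (socle_mul_const_term wva).
have relY_lhs : xy (2 * n - 2) 0 * g ^+ (n + 2) = t ^+ (n + 2) *: P.
  rewrite eg (xy_mul_binom_lead (2 * n - 2) (n + 2)); try xy_side.
  exact: P_mul_const (const_termXn _ vt).
have : (p ^+ n * (t * a *+ 2)) *: socle = 0.
  apply: (addrI ((p ^+ n * t ^+ 2) *: P)).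
  by rewrite -relXY_lhs addr0 (lin_relXY ef wp eg vt) -relY_lhs fg_relXY.
move/eqP; rewrite scale_socle_eq0 -mulr_natr !mulf_eq0 expf_eq0.
by rewrite (negbTE p_neq0) (negbTE t_neq0) (negbTE two_neq0) andbF /= orbF => /eqP.
Qed.

Lemma lin_relX w fb v gc p t :
  f = xy 1 0 * w + xy 0 2 * fb -> const_term w p ->
  g = xy 0 1 * v + xy 3 0 * gc -> const_term v t ->
  p ^+ (2 * n + 1) = t ^+ (n + 1) * p.
Proof.
move=> ef wp eg vt; apply: scale_socle_inj.
transitivity (xy (n - 1) 1 * f ^+ (2 * n + 1)).
  rewrite ef (xy_mul_binom_lead (3 * n) 1); try xy_side.
  by rewrite socle_xy_3n (socle_mul_const_term (const_termXn _ wp)).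
rewrite f_relX {1}ef xy_mul_sum2 eg (xy_mul_binom_lead n (n + 2)); try xy_side.
rewrite xy_mul_binom_eq0; try xy_side.
rewrite mul0r addr0 socle_xy_n -mulrA.
by rewrite (socle_mul_const_term (const_termM (const_termXn _ vt) wp)).
Qed.

Lemma y2n1_relXY w fb v gc :
  f = xy 1 0 * w + xy 0 2 * fb -> g = xy 0 1 * v + xy 3 0 * gc ->
  y2n1 * (w ^+ n * v ^+ 2) = y2n1 * v ^+ (n + 2).
Proof.
move=> ef eg; transitivity (xy 0 (n - 1) * (f ^+ n * g ^+ 2)).
  rewrite eg xy_sum2_sqr xy_mul_sum3 ef (xy_mul_binom_lead n (n + 1)); try xy_side.
  do 2 (rewrite xy_mul_binom_eq0; try xy_side).
  by rewrite !mul0r !addr0 y2n1_xy_n mulrA.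
by rewrite fg_relXY eg (xy_mul_binom_lead 0 (2 * n + 1)); try xy_side.
Qed.

Lemma y2n1_relX w fb v gc :
  f = xy 1 0 * w + xy 0 2 * fb -> g = xy 0 1 * v + xy 3 0 * gc ->
  y2n1 * w ^+ (2 * n + 1) = y2n1 * (v ^+ (n + 1) * w).
Proof.
move=> ef eg; transitivity (xy (n - 1) 0 * f ^+ (2 * n + 1)).
  by rewrite ef (xy_mul_binom_lead (3 * n) 0) ?y2n1_xy_3n //; xy_side.
rewrite f_relX {1}ef xy_mul_sum2 eg (xy_mul_binom_lead n (n + 1)); try xy_side.
rewrite xy_mul_binom_eq0; try xy_side.
by rewrite mul0r addr0 y2n1_xy_n mulrA.
Qed.

Lemma g_pow_y2n1 v gc : g = xy 0 1 * v + xy 3 0 * gc -> g ^+ (2 * n + 1) = y2n1 * v ^+ (2 * n + 1).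
Proof.
by move=> eg; rewrite -[LHS]mul1r -xy00 eg (xy_mul_binom_lead 0 (2 * n + 1)); try xy_side.
Qed.

Lemma image_normal_form : exists w fb v gc p t,
  [/\ f = xy 1 0 * w + xy 0 2 * fb, g = xy 0 1 * v + xy 3 0 * gc,
      const_term w p, const_term v t & t != 0].
Proof.
have [f1 [f2 ef]] := const_term0_xy const_f0.
have [g1 [g2 eg]] := const_term0_xy const_g0.
have [p f1p] := const_term_total f1; have [q f2q] := const_term_total f2.
have [s g1s] := const_term_total g1; have [t g2t] := const_term_total g2.
move: (g1s); rewrite (g_lin_x0 ef eg f1p g1s) => g1_0.
have t_neq0 := g_lin_y_neq0 eg g1_0 g2t.
have [v [ga [vt eg2]]] := shift_x 0 g2t g1_0; rewrite addrC eg2 in eg.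
move: (f2q); rewrite (f_lin_y0 ef f2q eg vt t_neq0) => f2_0.
have [w [fb [wp ef2]]] := shift_y 0 f1p f2_0; rewrite ef2 in ef.
have p_neq0 : p != 0.
  apply/eqP => p0; move/eqP: (lin_relXY ef wp eg vt).
  rewrite p0 expr0n gtn_eqF ?mul0r; last exact: ltnW.
  by rewrite eq_sym expf_eq0 (negbTE t_neq0) andbF.
have [a gaa] := const_term_total ga.
move: (gaa); rewrite (g_quad_x0 ef wp eg vt gaa p_neq0 t_neq0) => ga_0.
have [v' [gc [v't eg3]]] := shift_x 1 vt ga_0; rewrite eg3 in eg.
by exists w, fb, v', gc, p, t.
Qed.

Hypothesis n_neq0 : n%:R != 0 :> K.
Hypothesis n1_neq0 : n.-1%:R != 0 :> K.

Lemma image_y2n1 : exists t : K, t ^+ n.-1 = 1 /\ g ^+ (2 * n + 1) = t ^+ (2 * n + 1) *: y2n1.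
Proof.
have [w [fb [v [gc [p [t [ef eg wp vt t_neq0]]]]]]] := image_normal_form.
have eg2 : g = xy 0 1 * v + xy 2 0 * (xy 1 0 * gc) by rewrite mulrA xyM.
have [u jw] := jet_of_const_term wp; have [d jv] := jet_of_const_term vt.
have [J1 _] := jetM (jetXn n jw) (jetXn 2 jv).
have [J2 _] := jetXn (n + 2) jv.
have [J3 _] := jetXn (2 * n + 1) jw.
have [J4 _] := jetM (jetXn (n + 1) jv) jw.
have [J5 _] := jetXn (2 * n + 1) jv.
have eqXY := lin_relXY ef wp eg2 vt; have eqX := lin_relX ef wp eg vt.
have jet_relXY := y2n1_relXY ef eg; rewrite J1 J2 eqXY in jet_relXY.
have jet_relX := y2n1_relX ef eg; rewrite J3 J4 eqX in jet_relX.
move/addrI/scale_socle_inj: jet_relXY; move/addrI/scale_socle_inj: jet_relX.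
have pred_add m k : ((m + k.+1).-1 = m + k)%N by rewrite addnS.
rewrite !pred_add !addn0 => jet_relX jet_relXY.
have [t_root d0] := linear_coefficient_eqs n_ge2 n_neq0 n1_neq0 t_neq0 eqXY eqX jet_relXY jet_relX.
exists t; split=> //.
by rewrite (g_pow_y2n1 eg) J5 d0 mul0r mul0rn scale0r addr0.
Qed.

End Relations.

Section Presentation.
Variables (K : fieldType) (n : nat) (A : comAlgType K) (X Y : A).

Lemma evalXY_mpolyX (m : 'X_{1..2}) : evalXY X Y 'X_[m] = X ^+ (m ord0) * Y ^+ (m ord_max).
Proof.
rewrite /evalXY mmapX /mmap1 big_ord_recl big_ord1 /=.
by rewrite (_ : lift ord0 (ord0 : 'I_1) = ord_max) //; apply: val_inj.
Qed.

Lemma evalXY_px : evalXY X Y (px K) = X.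
Proof. by rewrite evalXY_mpolyX !mnm1E /= expr1 expr0 mulr1. Qed.

Lemma evalXY_py : evalXY X Y (py K) = Y.
Proof. by rewrite evalXY_mpolyX !mnm1E /= expr1 expr0 mul1r. Qed.

Lemma evalXYB p q : evalXY X Y (p - q) = evalXY X Y p - evalXY X Y q.
Proof. by rewrite /evalXY raddfB. Qed.

Lemma evalXYM p q : evalXY X Y (p * q) = evalXY X Y p * evalXY X Y q.
Proof. by rewrite /evalXY rmorphM. Qed.

Lemma evalXYXn p k : evalXY X Y (p ^+ k) = evalXY X Y p ^+ k.
Proof. by rewrite /evalXY rmorphXn. Qed.

Lemma presentation_rels : (forall p, in_In n p -> evalXY X Y p = 0) ->
  [/\ Y ^+ (2 * n + 3) = 0, X ^+ n * Y ^+ 2 = Y ^+ (n + 2) & X ^+ (2 * n + 1) = X * Y ^+ (n + 1)].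
Proof.
move=> In_ker; have In_gen c1 c2 c3 : in_In n (c1 * gen1 K n + c2 * gen2 K n + c3 * gen3 K n).
  by exists c1, c2, c3.
have := In_ker _ (In_gen 1 0 0); have := In_ker _ (In_gen 0 1 0); have := In_ker _ (In_gen 0 0 1).
rewrite !mul1r !mul0r ?addr0 ?add0r /gen1 /gen2 /gen3.
rewrite !(evalXYB, evalXYM, evalXYXn) !evalXY_px !evalXY_py.
by move=> /eqP; rewrite subr_eq0 => /eqP relX /eqP; rewrite subr_eq0 => /eqP relXY relY.
Qed.

Lemma const_term_evalXY : (forall a : A, exists p, a = evalXY X Y p) ->
  forall z : A, exists c, const_term X Y z c.
Proof.
move=> surj z; have [p ->] := surj z.
have X0 : const_term X Y X 0 by exists 1, 0; rewrite scale0r add0r mulr1 mulr0 addr0.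
have Y0 : const_term X Y Y 0 by exists 0, 1; rewrite scale0r add0r mulr1 mulr0 add0r.
elim/mpolyind: p => [|c m p _ _ [c0 IH]].
  by exists 0; exists 0, 0; rewrite /evalXY raddf0 scale0r !mulr0 !addr0.
exists (c * (0 ^+ m ord0 * 0 ^+ m ord_max) + c0).
rewrite /evalXY raddfD /= mmapZ -/(evalXY X Y 'X_[m]) evalXY_mpolyX.
apply: const_termD IH; apply: const_termM; first exact: const_term_alg.
by apply: const_termM; apply: const_termXn.
Qed.

End Presentation.

Section SocleFunctional.
Variables (K : fieldType) (n : nat).
Hypothesis n_ge2 : (2 <= n)%N.

Definition mexp (i j : nat) : 'X_{1..2} := (U_(ord0) *+ i + U_(ord_max) *+ j)%MM.

Lemma mexp0 i j : mexp i j ord0 = i.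
Proof. by rewrite /mexp mnmDE !mulmnE !mnm1E /= mul1n mul0n addn0. Qed.

Lemma mexp1 i j : mexp i j ord_max = j.
Proof. by rewrite /mexp mnmDE !mulmnE !mnm1E /= mul1n mul0n. Qed.

Lemma mexpP (m1 m2 : 'X_{1..2}) : m1 ord0 = m2 ord0 -> m1 ord_max = m2 ord_max -> m1 = m2.
Proof.
move=> e0 e1; apply/mnmP => k.
by case: k => [[|[|//]] k2]; [rewrite (_ : Ordinal k2 = ord0) | rewrite (_ : Ordinal k2 = ord_max)];
  rewrite ?e0 ?e1 //; apply: val_inj.
Qed.

Lemma eq_mexp a b c d : (mexp a b == mexp c d) = (a == c) && (b == d).
Proof.
apply/eqP/andP => [e | [/eqP -> /eqP ->] //].
by split; apply/eqP; [rewrite -(mexp0 a b) -(mexp0 c d) e | rewrite -(mexp1 a b) -(mexp1 c d) e].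
Qed.

Lemma mpolyX_mexp i j : px K ^+ i * py K ^+ j = 'X_[mexp i j].
Proof. by rewrite /px /py !mpolyXn -mpolyXD. Qed.

Lemma px_mexp i : px K ^+ i = 'X_[mexp i 0].
Proof. by rewrite -mpolyX_mexp expr0 mulr1. Qed.

Lemma py_mexp j : py K ^+ j = 'X_[mexp 0 j].
Proof. by rewrite -mpolyX_mexp expr0 mul1r. Qed.

Lemma mcoeff_mul_mexp (c : {mpoly K[2]}) i j a b :
  (c * 'X_[mexp i j])@_(mexp a b) =
  if (i <= a)%N && (j <= b)%N then c@_(mexp (a - i) (b - j)) else 0.
Proof.
case: ifP => ij.
  rewrite (_ : mexp a b = (mexp i j + mexp (a - i) (b - j))%MM) ?mcoeffMX //.
  by apply: mexpP; rewrite mnmDE ?mexp0 ?mexp1; lia.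
apply: memN_msupp_eq0; rewrite (perm_mem (msuppMX c (mexp i j))).
apply/mapP => [[m' _ e]]; move: ij.
have := mexp0 a b; have := mexp1 a b.
by rewrite e mnmDE mexp1 => <-; rewrite mnmDE mexp0 => <-; lia.
Qed.

(* These four monomials all represent y^(2n+2) in A_n, so the form vanishes on I_n. *)
Definition socle_coef (p : {mpoly K[2]}) :=
  p@_(mexp 0 (2 * n + 2)) + p@_(mexp n (n + 2)) + p@_(mexp (2 * n) 2) + p@_(mexp (3 * n) 1).

Lemma socle_coefD p q : socle_coef (p + q) = socle_coef p + socle_coef q.
Proof. by rewrite /socle_coef !mcoeffD; ring. Qed.

Lemma socle_coefN p : socle_coef (- p) = - socle_coef p.
Proof. by rewrite /socle_coef !mcoeffN; ring. Qed.

Local Ltac decide_ifs :=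
  repeat match goal with
  | |- context [if ?b then _ else _] =>
      first [rewrite (_ : b = true); last by lia | rewrite (_ : b = false); last by lia]
  end.

Lemma socle_coef_In p : in_In n p -> socle_coef p = 0.
Proof.
move=> [c1 [c2 [c3 ->]]].
rewrite /gen1 /gen2 /gen3 mpolyX_mexp -{2}[px K]expr1 mpolyX_mexp !py_mexp px_mexp.
rewrite !mulrBr !socle_coefD !socle_coefN /socle_coef !mcoeff_mul_mexp; decide_ifs.
have e1 : (2 * n - n = n)%N by lia.
have e2 : (2 * n + 2 - (n + 2) = n)%N by lia.
have e3 : (3 * n - (2 * n + 1) = n - 1)%N by lia.
have e4 : (n + 2 - (n + 1) = 1)%N by lia.
by rewrite !subnn !subn0 addnK e1 e2 e3 e4; ring.
Qed.

Lemma socle_coef_y2n2 : socle_coef (py K ^+ (2 * n + 2)) = 1.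
Proof.
have [n0 n20 n30] : [/\ (0 == n) = false, (0 == 2 * n) = false & (0 == 3 * n) = false]%N.
  by split; lia.
by rewrite py_mexp /socle_coef !mcoeffX !eq_mexp n0 n20 n30 !eqxx /= !addr0.
Qed.

End SocleFunctional.

Lemma presentation_socle_neq0 (K : fieldType) (n : nat) (A : comAlgType K) (X Y : A) :
  (2 <= n)%N -> (forall p, evalXY X Y p = 0 -> in_In n p) -> Y ^+ (2 * n + 2) != 0.
Proof.
move=> n_ge2 ker_In; apply/eqP => y_eq0.
have /(socle_coef_In n_ge2) : in_In n (py K ^+ (2 * n + 2)).
  by apply: ker_In; rewrite evalXYXn evalXY_py.
by rewrite (@socle_coef_y2n2 K n n_ge2) => /eqP; rewrite oner_eq0.
Qed.

Theorem theorem1p1 (K : fieldType) (n : nat) :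
  (2 <= n)%N ->
  ([pchar K] =i pred0 \/
   (forall p : nat, p \in [pchar K] -> coprime p n /\ coprime p n.-1)) ->
  forall (A : comAlgType K) (X Y : A),
  presents_An n X Y ->
  forall a : {lrmorphism A -> A}, bijective a ->
  exists gamma : K,
    a (Y ^+ (2 * n + 1)) = gamma *: Y ^+ (2 * n + 1) /\
    (if (n %% 3 == 1)%N then gamma ^+ ((n - 1) %/ 3) = 1
     else gamma ^+ (n - 1) = 1).
Proof.
move=> n_ge2 hchar A X Y [surj ker] a a_bij.
have [n_neq0 n1_neq0 two_neq0] := pchar_coprime_conditions n_ge2 hchar.
have [relY relXY relX] := presentation_rels (fun p => (ker p).2).
have y2n2_neq0 := presentation_socle_neq0 n_ge2 (fun p => (ker p).1).
have socle_neq0 : socle n X Y != 0 by rewrite /socle xy0j.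
have [aY_relY aXY_relXY aX_relX] : [/\ a Y ^+ (2 * n + 3) = 0,
    a X ^+ n * a Y ^+ 2 = a Y ^+ (n + 2) & a X ^+ (2 * n + 1) = a X * a Y ^+ (n + 1)].
  by rewrite -!rmorphXn -!rmorphM relY relXY relX raddf0.
have aY_neq0 : a Y ^+ (2 * n + 2) != 0.
  by rewrite -rmorphXn -(raddf0 a) (inj_eq (bij_inj a_bij)).
have [t [t_root aY_pow]] := image_y2n1 n_ge2 relY relXY relX socle_neq0
  (const_term_evalXY surj) aY_relY aXY_relXY aX_relX aY_neq0 two_neq0 n_neq0 n1_neq0.
exists (t ^+ (2 * n + 1)); split; first by rewrite rmorphXn aY_pow /y2n1 xy0j.
have t3 : t ^+ (2 * n + 1) = t ^+ 3.
  by rewrite (_ : (2 * n + 1 = n.-1 + n.-1 + 3)%N) ?exprD ?t_root ?mul1r //; lia.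
rewrite t3 -exprM; case: ifP => [/eqP n_mod3 | _].
  by rewrite (_ : (3 * ((n - 1) %/ 3) = n.-1)%N) //; lia.
by rewrite exprAC subn1 t_root expr1n.
Qed.
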